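(* Assume that $G=\mathbb Z_3^2$ acts on $\mathbb P^2$ (over $\mathbb C$) in such a way that the action is free outside a finite set. Then one can choose generators $g_1,g_2$ of $G$ and homogeneous coordinates $(x_0,x_1,x_2)$ on $\mathbb P^2$ such that $$g_1\colon(x_0,x_1,x_2)\mapsto(x_0,\omega x_1,\omega^2x_2),\qquad g_2\colon(x_0,x_1,x_2)\mapsto(x_1,x_2,x_0),$$ where $\omega\ne1$ is a cube root of $1$.
   Context: The action is by automorphisms of $\mathbb P^2$; ''free outside a finite set'' means that the set of points with nontrivial stabilizer is finite. *)

From mathcomp Require Import all_boot all_algebra.
From mathcomp Require Import Rstruct complex.
From Stdlib Require Import Reals.
Set Implicit Arguments. Unset Strict Implicit. Unset Printing Implicit Defensive.
Import GRing.Theory.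
Local Open Scope ring_scope.

Definition CC : numClosedFieldType := complex Rdefinitions.R.

Definition G := ('Z_3 * 'Z_3)%type.

(* Points of P^2 are nonzero column vectors of C^3 up to nonzero scalars.
   Two vectors / matrices are projectively equal if they differ by a nonzero scalar. *)
Definition proj_eq (m n : nat) (A B : 'M[CC]_(m, n)) : Prop :=
  exists2 c : CC, c != 0 & A = c *: B.

(* An action of G on P^2 by automorphisms: a homomorphism G -> PGL_3(C),
   given by lifts rho g in GL_3(C); g acts by [v] |-> [rho g *m v]. *)
Definition proj_action (rho : G -> 'M[CC]_3) : Prop :=
  (forall g, rho g \in unitmx) /\
  (forall g h, proj_eq (rho (g + h)) (rho g *m rho h)).

Definition nontriv_stab (rho : G -> 'M[CC]_3) (v : 'cV[CC]_3) : Prop :=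
  exists2 g : G, g != 0 & exists c : CC, rho g *m v = c *: v.

Definition free_outside_finite (rho : G -> 'M[CC]_3) : Prop :=
  exists S : seq 'cV[CC]_3,
    forall v : 'cV[CC]_3, v != 0 -> nontriv_stab rho v ->
      exists2 w, w \in S & proj_eq v w.

Definition generates (g1 g2 : G) : Prop :=
  forall g : G, exists a b : nat, g = g1 *+ a + g2 *+ b.

Definition diag_w (w : CC) : 'M[CC]_3 :=
  \matrix_(i < 3, j < 3) (if i == j then w ^+ i else 0).

(* (x0,x1,x2) |-> (x1,x2,x0): the new i-th coordinate is x_{i+1 mod 3}. *)
Definition cyc_perm : 'M[CC]_3 :=
  \matrix_(i < 3, j < 3) (if (j : nat) == modn (nat_of_ord i).+1 3 then 1 else 0).

(* Lift the generators e1, e2 of G to R1 = rho e1 and R2 = rho e2 in GL_3.  Then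
   R1 R2 = c R2 R1 with c^3 = 1 (take determinants), and R1^3, R2^3 are scalar.
   If c = 1, the lifts commute and have two common eigenvectors v0, v1 spanning a
   line of P^2.  The ratio of the eigenvalues of rho g on v1 and on v0 is then a
   homomorphism from G to the cube roots of unity, so it is trivial on some g <> 0,
   and this g fixes every point of the line: infinitely many points with nontrivial
   stabilizer.  Hence c is a primitive cube root of unity.  If R1 v = l v and R2 is
   rescaled so that R2^3 = 1, then v, R2^2 v, R2 v are eigenvectors of R1 for the
   distinct eigenvalues l, c^2 l, c l, permuted cyclically by R2; in this basis R1
   and R2 are the required matrices. *)

From mathcomp Require Import all_boot all_algebra.
From mathcomp Require Import Rstruct complex.
From mathcomp Require Import ring.
From Stdlib Require Import Classical_Prop.

Set Implicit Arguments.
Unset Strict Implicit.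
Unset Printing Implicit Defensive.

Import GRing.Theory Num.Theory.
Local Open Scope ring_scope.

Lemma prime_prim_root (R : nzRingType) p (z : R) :
  prime p -> z ^+ p = 1 -> z != 1 -> p.-primitive_root z.
Proof.
move=> p_prime zp z_neq1.
have [m prim_m m_dvd_p] := prim_order_exists (prime_gt0 p_prime) zp.
case/primeP: p_prime => _ /(_ m m_dvd_p) /orP [/eqP m1 | /eqP <- //].
by move: prim_m z_neq1; rewrite m1 => /prim_expr_order; rewrite expr1 => ->; rewrite eqxx.
Qed.

Lemma cube_root_unity_exists (C : numClosedFieldType) : exists z : C, 3.-primitive_root z.
Proof.
have /closed_rootP [z /rootP] : size ('X^2 + 'X + 1 : {poly C}) != 1%N.
  by rewrite -addrA size_polyDl ?size_polyXn ?size_XaddC.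
rewrite !hornerE => z_root; exists z; apply: prime_prim_root => //.
  apply/subr0_eq; transitivity ((z - 1) * (z ^+ 2 + z + 1)); first by ring.
  by rewrite z_root mulr0.
apply: contra_eq_neq z_root => ->.
by rewrite expr1n -addrA -[1 + (1 + 1)]/(3%:R : C) pnatr_eq0.
Qed.

Section EigenLinearAlgebra.

Variable F : fieldType.

Lemma eigenvector_nonunit n (A : 'M[F]_n) l :
  A - l%:M \notin unitmx -> exists2 v : 'cV_n, v != 0 & A *m v = l *: v.
Proof.
rewrite unitmxE unitfE negbK -det_tr => /det0P [r r_neq0 rA0].
exists r^T; first by rewrite trmx_eq0.
apply/eqP; rewrite -subr_eq0 -mul_scalar_mx -mulmxBl -trmx_eq0 trmx_mul trmxK.
by rewrite rA0.
Qed.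

Lemma eigenvector_exp n (A : 'M[F]_n.+1) (v : 'cV_n.+1) l k :
  A *m v = l *: v -> A ^+ k *m v = l ^+ k *: v.
Proof.
move=> Av; elim: k => [|k IHk]; first by rewrite expr0 expr0 scale1r mul1mx.
by rewrite exprSr -mulmxE -mulmxA Av -scalemxAr IHk scalerA -exprS.
Qed.

Lemma scalev_inj n (v : 'cV[F]_n) x y : v != 0 -> x *: v = y *: v -> x = y.
Proof.
move=> v_neq0 /eqP; rewrite -subr_eq0 -scalerBl scalemx_eq0 (negbTE v_neq0) orbF.
by rewrite subr_eq0 => /eqP.
Qed.

Lemma skew_commute_unity_root n (A B : 'M[F]_n) c :
  A \in unitmx -> B \in unitmx -> A *m B = c *: (B *m A) -> c ^+ n = 1.
Proof.
move=> A_unit B_unit /(congr1 determinant).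
rewrite detZ !det_mulmx [\det B * _]mulrC -{1}[\det A * _]mul1r => /mulIf-> //.
by rewrite mulf_neq0 // -unitfE -unitmxE.
Qed.

Lemma skew_commute_eigenvector n (A B : 'M[F]_n) c (v : 'cV_n) l :
  A *m B = c *: (B *m A) -> A *m v = l *: v -> A *m (B *m v) = (c * l) *: (B *m v).
Proof.
by move=> AB Av; rewrite mulmxA AB -scalemxAl -mulmxA Av -scalemxAr scalerA.
Qed.

Lemma eigen_lincomb_coef0 n (A : 'M[F]_n) (f0 f1 f2 : 'cV_n) l0 l1 l2 x0 x1 x2 :
  A *m f0 = l0 *: f0 -> A *m f1 = l1 *: f1 -> A *m f2 = l2 *: f2 ->
  l0 != l1 -> l0 != l2 -> f0 != 0 ->
  x0 *: f0 + x1 *: f1 + x2 *: f2 = 0 -> x0 = 0.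
Proof.
move=> Af0 Af1 Af2 l01 l02 f0_neq0 eq0.
have shift (f : 'cV_n) l m : A *m f = l *: f -> (A - m%:M) *m f = (l - m) *: f.
  by move=> Af; rewrite mulmxBl mul_scalar_mx Af scalerBl.
pose T := (A - l1%:M) *m (A - l2%:M).
have T_eigen (f : 'cV_n) l : A *m f = l *: f -> T *m f = ((l - l1) * (l - l2)) *: f.
  by move=> Af; rewrite -mulmxA (shift f l) // -scalemxAr (shift f l) // scalerA mulrC.
move/(congr1 (mulmx T)): eq0.
rewrite mulmx0 !mulmxDr -!scalemxAr (T_eigen _ _ Af0) (T_eigen _ _ Af1) (T_eigen _ _ Af2).
rewrite !subrr mul0r mulr0 !scale0r !scaler0 !addr0 scalerA => /eqP.
rewrite scalemx_eq0 (negbTE f0_neq0) orbF !mulf_eq0 !subr_eq0 (negbTE l01) (negbTE l02).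
by rewrite !orbF => /eqP.
Qed.

Lemma unity_root_nonunit n k z (B : 'M[F]_n.+1) :
  k.-primitive_root z -> B ^+ k = 1 -> B != 1 ->
  exists2 i : 'I_k, i != 0 :> nat & B - (z ^+ i)%:M \notin unitmx.
Proof.
move=> prim_z Bk B_neq1.
have prod0 : \prod_(0 <= i < k) (B - (z ^+ i)%:M) = 0.
  have := congr1 (horner_mx B) (factor_Xn_sub_1 prim_z).
  rewrite rmorph_prod rmorphB rmorphXn rmorph1 /= horner_mx_X Bk subrr => <-.
  by apply: eq_bigr => i _; rewrite rmorphB /= horner_mx_X horner_mx_C.
pose bad := [pred i : 'I_k | (i != 0 :> nat) && (B - (z ^+ i)%:M \notin unitmx)].
case: (pickP bad) => [i /andP [i_neq0 i_bad] | all_unit]; first by exists i.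
pose tail := \prod_(1 <= i < k) (B - (z ^+ i)%:M).
have tail_unit : tail \is a GRing.unit.
  rewrite /tail big_nat_cond; apply: (big_ind (fun M => M \is a GRing.unit)).
  - exact: unitr1.
  - by move=> x y x_unit y_unit; rewrite unitrMl.
  - move=> i /andP [/andP [i_gt0 i_lt_k] _].
    by move: (all_unit (Ordinal i_lt_k)) => /= /negbT; rewrite -lt0n i_gt0 negbK.
have : (B - (z ^+ 0)%:M) * tail = 0.
  by rewrite -prod0 [RHS]big_ltn // (prim_order_gt0 prim_z).
rewrite expr0 -(mul0r tail) => /(mulIr tail_unit)/eqP.
by rewrite subr_eq0 (negbTE B_neq1).
Qed.

Definition cols3 n (f0 f1 f2 : 'cV[F]_n) : 'M[F]_(n, 3) :=
  \matrix_(i, j) [:: f0; f1; f2]`_j i 0.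

Lemma mulmx_cols3 m n (A : 'M[F]_(m, n)) f0 f1 f2 :
  A *m cols3 f0 f1 f2 = cols3 (A *m f0) (A *m f1) (A *m f2).
Proof.
apply/matrixP => i [[|[|[|//]]] ?]; rewrite !mxE /=;
  by apply: eq_bigr => k _; rewrite mxE.
Qed.

Lemma cols3_mulmx n (f0 f1 f2 : 'cV[F]_n) (x : 'cV_3) :
  cols3 f0 f1 f2 *m x = x 0 0 *: f0 + x 1 0 *: f1 + x 2 0 *: f2.
Proof.
apply/matrixP => i j; rewrite ord1 !mxE !big_ord_recl big_ord0 addr0 addrA !mxE /=.
rewrite (mulrC (f0 i 0)) (mulrC (f1 i 0)) (mulrC (f2 i 0)).
by congr (x _ 0 * _ + x _ 0 * _ + x _ 0 * _); apply: val_inj.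
Qed.

Lemma unitmx_cols3 (A : 'M[F]_3) f0 f1 f2 l0 l1 l2 :
  A *m f0 = l0 *: f0 -> A *m f1 = l1 *: f1 -> A *m f2 = l2 *: f2 ->
  l0 != l1 -> l0 != l2 -> l1 != l2 -> [&& f0 != 0, f1 != 0 & f2 != 0] ->
  cols3 f0 f1 f2 \in unitmx.
Proof.
move=> Af0 Af1 Af2 l01 l02 l12 /and3P [f0_neq0 f1_neq0 f2_neq0].
rewrite unitmxE unitfE -det_tr; apply/negP => /det0P [r r_neq0].
move/(congr1 trmx); rewrite trmx_mul trmxK trmx0 cols3_mulmx.
rewrite -trmx_eq0 in r_neq0; set x := r^T in r_neq0 * => x_ker.
have x0 : x 0 0 = 0 := eigen_lincomb_coef0 Af0 Af1 Af2 l01 l02 f0_neq0 x_ker.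
have x1 : x 1 0 = 0.
  move: x_ker; rewrite (addrC (_ *: f0)).
  by apply: eigen_lincomb_coef0 Af1 Af0 Af2 _ l12 f1_neq0; rewrite eq_sym.
have x2 : x 2 0 = 0.
  move: x_ker; rewrite addrC addrA.
  by apply: eigen_lincomb_coef0 Af2 Af0 Af1 _ _ f2_neq0; rewrite eq_sym.
case/eqP: r_neq0; apply/matrixP => i j; rewrite ord1 [RHS]mxE.
by case: i => [[|[|[|//]]] ?];
  [rewrite -x0 | rewrite -x1 | rewrite -x2]; congr (x _ _); apply: val_inj.
Qed.

Lemma eigenvectors_not_proportional n (A : 'M[F]_n) (v0 v1 : 'cV_n) l m :
  A *m v0 = l *: v0 -> A *m v1 = m *: v1 -> v1 != 0 -> l != m ->
  ~ exists k, v1 = k *: v0.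
Proof.
move=> Av0 Av1 v1_neq0 /eqP lm [k v1_def]; apply: lm; apply: (scalev_inj v1_neq0).
by rewrite -Av1 v1_def -scalemxAr Av0 !scalerA mulrC.
Qed.

Lemma scale_cols3 n k (f0 f1 f2 : 'cV[F]_n) :
  k *: cols3 f0 f1 f2 = cols3 (k *: f0) (k *: f1) (k *: f2).
Proof. by apply/matrixP => i [[|[|[|//]]] ?]; rewrite !mxE. Qed.

End EigenLinearAlgebra.

Section ClosedFieldEigen.

Variable C : numClosedFieldType.

Lemma eigenvector_closed n (A : 'M[C]_n.+1) :
  exists l (v : 'cV_n.+1), v != 0 /\ A *m v = l *: v.
Proof.
have [l /eigenvalueP [r rA r_neq0]] := eigenvalue_closed A^T isT.
exists l, r^T; split; first by rewrite trmx_eq0.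
by rewrite -[A]trmxK -trmx_mul rA linearZ.
Qed.

Lemma cube_scalar_two_eigenvalues n (A : 'M[C]_n.+1) a :
  A ^+ 3 = a%:M -> a != 0 -> (forall l, A != l%:M) ->
  exists l zeta (v0 v1 : 'cV_n.+1),
    [/\ 3.-primitive_root zeta, l != 0,
        v0 != 0 /\ A *m v0 = l *: v0 & v1 != 0 /\ A *m v1 = (zeta * l) *: v1].
Proof.
move=> A3 a_neq0 A_nonscalar.
have [l [v0 [v0_neq0 Av0]]] := eigenvector_closed A.
have l3 : l ^+ 3 = a.
  by apply: (scalev_inj v0_neq0); rewrite -(eigenvector_exp 3 Av0) A3 mul_scalar_mx.
have l_neq0 : l != 0 by apply: contra_eq_neq l3 => ->; rewrite expr0n eq_sym.
have [z prim_z] := cube_root_unity_exists C.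
have B3 : (l^-1 *: A) ^+ 3 = 1 by rewrite exprZn A3 exprVn l3 scale_scalar_mx mulVf.
have B_neq1 : l^-1 *: A != 1.
  apply: contra_neq (A_nonscalar l) => A_l.
  by rewrite -[A](scalerKV l_neq0) A_l scalemx1.
have [i i_neq0 nonunit] := unity_root_nonunit prim_z B3 B_neq1.
have [v1 v1_neq0 Av1] := eigenvector_nonunit nonunit.
exists l, (z ^+ i), v0, v1; split => //.
- by rewrite prim_root_exp_coprime //; move: (ltn_ord i) i_neq0; case: (val i) => [|[|[|]]].
- by split; rewrite // -[A](scalerKV l_neq0) -scalemxAl Av1 scalerA mulrC.
Qed.

End ClosedFieldEigen.

Section ProjectiveEquality.

Variables m n : nat.
Implicit Types A B D : 'M[CC]_(m, n).

Lemma proj_eq_refl A : proj_eq A A.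
Proof. by exists 1; rewrite ?oner_neq0 ?scale1r. Qed.

Lemma proj_eq_sym A B : proj_eq A B -> proj_eq B A.
Proof.
by move=> [c c_neq0 ->]; exists c^-1; rewrite ?invr_eq0 // scalerA mulVf ?scale1r.
Qed.

Lemma proj_eq_trans A B D : proj_eq A B -> proj_eq B D -> proj_eq A D.
Proof.
by move=> [c c_neq0 ->] [d d_neq0 ->]; exists (c * d); rewrite ?mulf_neq0 ?scalerA.
Qed.

Lemma proj_eq_pigeonhole (S : seq 'M[CC]_(m, n)) (p : nat -> 'M[CC]_(m, n)) :
  (forall i j, proj_eq (p i) (p j) -> i = j) ->
  ~ (forall i, exists2 w, w \in S & proj_eq (p i) w).
Proof.
move=> p_inj p_in_S.
have /fin_all_exists [f pf] :
    forall i : 'I_(size S).+1, exists j : 'I_(size S), proj_eq (p i) S`_j.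
  move=> i; have [w w_in_S piw] := p_in_S i.
  by exists (Ordinal (etrans (index_mem w S) w_in_S)); rewrite /= nth_index.
have f_inj : injective f.
  move=> i j fij; apply/val_inj/p_inj.
  by apply: proj_eq_trans (pf i) _; rewrite fij; exact: proj_eq_sym (pf j).
by have := leq_card f f_inj; rewrite !card_ord ltnn.
Qed.

End ProjectiveEquality.

Lemma proj_eq_mulmx m n p (A B : 'M[CC]_(m, n)) (D E : 'M[CC]_(n, p)) :
  proj_eq A B -> proj_eq D E -> proj_eq (A *m D) (B *m E).
Proof.
move=> [c c_neq0 ->] [d d_neq0 ->]; exists (c * d); first by rewrite mulf_neq0.
by rewrite -scalemxAl -scalemxAr scalerA.
Qed.

Lemma proj_eq_scalar n (A : 'M[CC]_n) : proj_eq A 1%:M -> exists2 a, a != 0 & A = a%:M.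
Proof. by move=> [a a_neq0 ->]; exists a; rewrite // scalemx1. Qed.

Lemma proj_eq_conj n (P M N : 'M[CC]_n) :
  P \in unitmx -> proj_eq (M *m P) (P *m N) -> proj_eq (invmx P *m M *m invmx (invmx P)) N.
Proof.
move=> P_unit [k k_neq0 MP]; exists k => //.
by rewrite invmxK -mulmxA MP -scalemxAr mulKmx.
Qed.

Lemma pencil_neq0 (F : numFieldType) n (u w : 'cV[F]_n) i :
  u != 0 -> ~ (exists k, w = k *: u) -> u + i%:R *: w != 0.
Proof.
case: i => [|i] u_neq0 w_indep; first by rewrite scale0r addr0.
rewrite addr_eq0; apply: contra_not_neq w_indep => u_def.
exists (- i.+1%:R^-1); rewrite u_def scaleNr scalerN opprK scalerA mulVf ?scale1r //.
by rewrite pnatr_eq0.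
Qed.

Lemma pencil_proj_inj n (u w : 'cV[CC]_n) i j :
  u != 0 -> ~ (exists k, w = k *: u) ->
  proj_eq (u + i%:R *: w) (u + j%:R *: w) -> i = j.
Proof.
move=> u_neq0 w_indep [k _ eq_ij].
have uw : (1 - k) *: u = (k * j%:R - i%:R) *: w.
  apply/matrixP => a b; move/matrixP/(_ a b): eq_ij; rewrite !mxE => eq_ab.
  apply/eqP; rewrite -subr_eq0; apply/eqP.
  transitivity (u a b + i%:R * w a b - k * (u a b + j%:R * w a b)); first by ring.
  by rewrite eq_ab subrr.
have [ij | ij] := eqVneq (k * j%:R - i%:R) 0.
  move: uw; rewrite ij scale0r => /eqP; rewrite scalemx_eq0 (negbTE u_neq0) orbF subr_eq0.
  by move/eqP=> k1; move/eqP: ij; rewrite -k1 mul1r subr_eq0 eqr_nat => /eqP.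
case: w_indep; exists ((k * j%:R - i%:R)^-1 * (1 - k)).
by rewrite -scalerA uw scalerA mulVf ?scale1r.
Qed.

Lemma cols3_diag_w (f0 f1 f2 : 'cV[CC]_3) w :
  cols3 f0 f1 f2 *m diag_w w = cols3 f0 (w *: f1) (w ^+ 2 *: f2).
Proof.
apply/matrixP => i [[|[|[|//]]] ?];
  by rewrite !mxE !big_ord_recl big_ord0 !mxE /= !mulr0 ?mulr1 ?add0r ?addr0 // mulrC.
Qed.

Lemma cols3_cyc_perm (f0 f1 f2 : 'cV[CC]_3) :
  cols3 f0 f1 f2 *m cyc_perm = cols3 f2 f0 f1.
Proof.
apply/matrixP => i [[|[|[|//]]] ?];
  by rewrite !mxE !big_ord_recl big_ord0 !mxE /= !mulr0 ?mulr1 ?add0r ?addr0.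
Qed.

Lemma heisenberg_normal_form (R1 R2 : 'M[CC]_3) c a :
  R1 \in unitmx -> R1 *m R2 = c *: (R2 *m R1) -> 3.-primitive_root c ->
  R2 ^+ 3 = a%:M -> a != 0 ->
  exists2 P : 'M[CC]_3, P \in unitmx &
    proj_eq (R1 *m P) (P *m diag_w (c ^+ 2)) /\ proj_eq (R2 *m P) (P *m cyc_perm).
Proof.
move=> R1_unit R12 prim_c R2_3 a_neq0.
have [l [v [v_neq0 R1v]]] := eigenvector_closed R1.
have l_neq0 : l != 0.
  by apply: contraNneq v_neq0 => l0; rewrite -(mulKmx R1_unit v) R1v l0 scale0r mulmx0.
pose s := 3.-root a^-1; pose T := s *: R2.
have s_neq0 : s != 0 by rewrite rootC_eq0 // invr_eq0.
have T3 : T ^+ 3 = 1.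
  by rewrite exprZn R2_3 rootCK // scale_scalar_mx mulVf.
have R1T : R1 *m T = c *: (T *m R1).
  by rewrite -scalemxAr R12 -scalemxAl !scalerA mulrC.
pose f2 := T *m v; pose f1 := T *m f2.
have Tf1 : T *m f1 = v.
  by rewrite /f1 /f2 !mulmxA mulmxE -expr2 -exprSr T3 mul1mx.
have f1_neq0 : f1 != 0 by apply: contraNneq v_neq0 => f1_0; rewrite -Tf1 f1_0 mulmx0.
have f2_neq0 : f2 != 0 by apply: contraNneq f1_neq0 => f2_0; rewrite /f1 f2_0 mulmx0.
have E0 : R1 *m v = (c ^+ 0 * l) *: v by rewrite mul1r.
have E2 : R1 *m f2 = (c ^+ 1 * l) *: f2 by rewrite expr1; apply: skew_commute_eigenvector.
have E1 : R1 *m f1 = (c ^+ 2 * l) *: f1.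
  by rewrite exprS -mulrA; apply: skew_commute_eigenvector.
have distinct i j : (i < 3)%N -> (j < 3)%N -> i != j -> c ^+ i * l != c ^+ j * l.
  move=> i_lt3 j_lt3 ij; rewrite (inj_eq (mulIf l_neq0)) (eq_prim_root_expr prim_c).
  by rewrite !modn_small.
exists (cols3 v f1 f2).
  by apply: (unitmx_cols3 E0 E1 E2); rewrite ?distinct ?v_neq0 ?f1_neq0.
split.
- exists l => //; rewrite mulmx_cols3 E0 E1 E2 cols3_diag_w scale_cols3 -exprM.
  rewrite (prim_expr_mod prim_c 4) mul1r !scalerA; congr cols3; congr (_ *: _); exact: mulrC.
- exists s^-1; first by rewrite invr_eq0.
  have R2_T : R2 = s^-1 *: T by rewrite scalerA mulVf ?scale1r.
  by rewrite R2_T -scalemxAl mulmx_cols3 cols3_cyc_perm Tf1.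
Qed.

Definition e1 : G := (1, 0).
Definition e2 : G := (0, 1).

Lemma generates_e1e2 : generates e1 e2.
Proof.
by case=> [[[|[|[|?]]] ?] [[|[|[|?]]] ?]] //;
  [exists 0%N, 0%N | exists 0%N, 1%N | exists 0%N, 2%N | exists 1%N, 0%N
  | exists 1%N, 1%N | exists 1%N, 2%N | exists 2%N, 0%N | exists 2%N, 1%N
  | exists 2%N, 2%N]; apply/eqP.
Qed.

Lemma G_mulrn3 (g : G) : g *+ 3 = 0.
Proof. by case: g => [[[|[|[|?]]] ?] [[|[|[|?]]] ?]] //; apply/eqP. Qed.

Section ProjectiveAction.

Variable rho : G -> 'M[CC]_3.
Hypothesis rho_act : proj_action rho.

Lemma rho_unit g : rho g \in unitmx.
Proof. by case: rho_act. Qed.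

Lemma rho_add g h : proj_eq (rho (g + h)) (rho g *m rho h).
Proof. by case: rho_act. Qed.

Lemma rho0 : proj_eq (rho 0) 1%:M.
Proof.
have := proj_eq_mulmx (proj_eq_refl (invmx (rho 0))) (rho_add 0 0).
by rewrite addr0 mulmxA mulVmx ?rho_unit // mul1mx => /proj_eq_sym.
Qed.

Lemma rho_mulrn g k : proj_eq (rho (g *+ k)) (rho g ^+ k).
Proof.
elim: k => [|k IHk]; first by rewrite mulr0n expr0; exact: rho0.
rewrite mulrS exprS -mulmxE; apply: proj_eq_trans (rho_add _ _) _.
exact: proj_eq_mulmx (proj_eq_refl _) IHk.
Qed.

Lemma rho_cube_scalar g : exists2 a, a != 0 & rho g ^+ 3 = a%:M.
Proof.
apply: proj_eq_scalar; apply: proj_eq_trans (proj_eq_sym (rho_mulrn g 3)) _.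
by rewrite G_mulrn3; exact: rho0.
Qed.

Lemma rho_commute g h : proj_eq (rho g *m rho h) (rho h *m rho g).
Proof.
by apply: proj_eq_trans (proj_eq_sym (rho_add g h)) _; rewrite addrC; exact: rho_add.
Qed.

(* Unlike the eigenvalues themselves, their ratio does not depend on the scalar
   normalisation of the lift rho g. *)
Definition eigen_ratio g (v0 v1 : 'cV[CC]_3) r :=
  exists x, rho g *m v0 = x *: v0 /\ rho g *m v1 = (r * x) *: v1.

Lemma eigen_ratio0 v0 v1 : eigen_ratio 0 v0 v1 1.
Proof.
have [k _ rho0_k] := rho0.
by exists k; rewrite rho0_k scalemx1 mul1r !mul_scalar_mx.
Qed.

Lemma eigen_ratio_add g h v0 v1 r r' :
  eigen_ratio g v0 v1 r -> eigen_ratio h v0 v1 r' -> eigen_ratio (g + h) v0 v1 (r * r').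
Proof.
move=> [x [gv0 gv1]] [y [hv0 hv1]]; have [k _ rho_gh] := rho_add g h.
exists (k * (x * y)); rewrite rho_gh -!scalemxAl -!mulmxA hv0 hv1 -!scalemxAr gv0 gv1.
by rewrite !scalerA; split; congr (_ *: _); ring.
Qed.

Lemma eigen_ratio_mulrn g v0 v1 r k :
  eigen_ratio g v0 v1 r -> eigen_ratio (g *+ k) v0 v1 (r ^+ k).
Proof.
move=> ratio_g; elim: k => [|k IHk]; first exact: eigen_ratio0.
by rewrite mulrS exprS; apply: eigen_ratio_add.
Qed.

Hypothesis rho_free : free_outside_finite rho.

Lemma eigenvector_proportional g (u w : 'cV[CC]_3) t :
  g != 0 -> u != 0 -> rho g *m u = t *: u -> rho g *m w = t *: w ->
  exists k, w = k *: u.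
Proof.
move=> g_neq0 u_neq0 gu gw; apply: NNPP => w_indep; have [S S_stab] := rho_free.
apply: (@proj_eq_pigeonhole _ _ S (fun i => u + i%:R *: w)) => [i j|i].
  exact: pencil_proj_inj.
apply: S_stab; first exact: pencil_neq0.
exists g => //; exists t.
by rewrite mulmxDr -scalemxAr gu gw scalerDr !scalerA mulrC.
Qed.

Lemma rho_nonscalar g l : g != 0 -> rho g != l%:M.
Proof.
move=> g_neq0; apply/eqP => rho_l.
pose e i : 'cV[CC]_3 := delta_mx i 0.
have e_eigen i : rho g *m e i = l *: e i by rewrite rho_l mul_scalar_mx.
have e_neq0 i : e i != 0.
  by apply/eqP => /matrixP/(_ i 0)/eqP; rewrite !mxE !eqxx oner_eq0.
have [k /matrixP/(_ 1 0)/eqP] :=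
  eigenvector_proportional g_neq0 (e_neq0 0) (e_eigen 0) (e_eigen 1).
by rewrite !mxE /= mulr0 oner_eq0.
Qed.

Lemma eigen_ratio_neq1 g v0 v1 :
  g != 0 -> v0 != 0 -> ~ (exists k, v1 = k *: v0) -> ~ eigen_ratio g v0 v1 1.
Proof.
move=> g_neq0 v0_neq0 v1_indep [x [gv0 gv1]]; apply: v1_indep.
by apply: eigenvector_proportional g_neq0 v0_neq0 gv0 _; rewrite gv1 mul1r.
Qed.

Lemma commuting_eigenvector g h (v : 'cV[CC]_3) l :
  g != 0 -> v != 0 -> rho g *m rho h = rho h *m rho g -> rho g *m v = l *: v ->
  exists b, rho h *m v = b *: v.
Proof.
move=> g_neq0 v_neq0 gh gv; apply: (eigenvector_proportional g_neq0 v_neq0 gv).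
by rewrite mulmxA gh -mulmxA gv scalemxAr.
Qed.

Lemma lifts_noncommuting : rho e1 *m rho e2 != rho e2 *m rho e1.
Proof.
apply/eqP => comm.
have [a a_neq0 A3] := rho_cube_scalar e1.
have [l [zeta [v0 [v1 [prim_zeta l_neq0 [v0_neq0 Av0] [v1_neq0 Av1]]]]]] :=
  cube_scalar_two_eigenvalues A3 a_neq0 (fun l => rho_nonscalar l (isT : e1 != 0)).
have zeta_l : l != zeta * l.
  rewrite -{1}[l]mul1r (inj_eq (mulIf l_neq0)) -(expr0 zeta) -{2}(expr1 zeta).
  by rewrite (eq_prim_root_expr prim_zeta).
have v1_indep := eigenvectors_not_proportional Av0 Av1 v1_neq0 zeta_l.
have [b0 Bv0] := commuting_eigenvector (isT : e1 != 0) v0_neq0 comm Av0.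
have [b1 Bv1] := commuting_eigenvector (isT : e1 != 0) v1_neq0 comm Av1.
have [b b_neq0 B3] := rho_cube_scalar e2.
have cube bi (v : 'cV_3) : v != 0 -> rho e2 *m v = bi *: v -> bi ^+ 3 = b.
  move=> v_neq0 Bv; apply: (scalev_inj v_neq0).
  by rewrite -(eigenvector_exp 3 Bv) B3 mul_scalar_mx.
have b0_neq0 : b0 != 0.
  by apply: contra_eq_neq (cube _ _ v0_neq0 Bv0) => ->; rewrite expr0n eq_sym.
have q3 : (b1 / b0) ^+ 3 = 1.
  by rewrite exprMn exprVn (cube _ _ v0_neq0 Bv0) (cube _ _ v1_neq0 Bv1) mulfV.
have [j b1_def] := prim_rootP prim_zeta q3.
have ratio1 : eigen_ratio e1 v0 v1 zeta by exists l.
have ratio2 : eigen_ratio e2 v0 v1 (zeta ^+ j) by exists b0; rewrite -b1_def divfK.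
(* The ratio is trivial on the nonzero element e1 *+ (3 - j) + e2. *)
have := eigen_ratio_add (eigen_ratio_mulrn (3 - j) ratio1) ratio2.
rewrite -exprD subnK ?(prim_expr_order prim_zeta); last exact: ltnW.
apply: eigen_ratio_neq1 v0_neq0 v1_indep.
by move: (nat_of_ord j) (ltn_ord j) => [|[|[|]]].
Qed.

End ProjectiveAction.

Theorem lemma5p5 (rho : G -> 'M[CC]_3) :
  proj_action rho -> free_outside_finite rho ->
  exists (g1 g2 : G) (A : 'M[CC]_3) (w : CC),
    [/\ generates g1 g2, A \in unitmx, w ^+ 3 = 1, w != 1
      & proj_eq (A *m rho g1 *m invmx A) (diag_w w) /\
        proj_eq (A *m rho g2 *m invmx A) cyc_perm].
Proof.
move=> rho_act rho_free.
have [c c_neq0 R12] := rho_commute rho_act e1 e2.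
have c3 := skew_commute_unity_root (rho_unit rho_act e1) (rho_unit rho_act e2) R12.
have c_neq1 : c != 1.
  by apply: contra_neq (lifts_noncommuting rho_act rho_free) => c1; rewrite R12 c1 scale1r.
have prim_c := prime_prim_root (isT : prime 3) c3 c_neq1.
have [a a_neq0 R2_3] := rho_cube_scalar rho_act e2.
have [P P_unit [R1P R2P]] :=
  heisenberg_normal_form (rho_unit rho_act e1) R12 prim_c R2_3 a_neq0.
exists e1, e2, (invmx P), (c ^+ 2); split.
- exact: generates_e1e2.
- by rewrite unitmx_inv.
- by rewrite exprAC (prim_expr_order prim_c) expr1n.
- by rewrite -(expr0 c) (eq_prim_root_expr prim_c).
- by split; apply: proj_eq_conj.
Qed.
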